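(* Consider the class of three-valued logics (as defined in the context) that are paraconsistent and have properties (a) and (b). There is exactly one logic in this class whose logical equivalence relation $\equiv$ satisfies, for all formulas $A,B,C$, all of the following: (1) $A\wedge\bot \equiv \bot$; (2) $A\vee\top\equiv\top$; (3) $A\wedge\top\equiv A$; (4) $A\vee\bot\equiv A$; (5) $A\wedge A\equiv A$; (6) $A\vee A\equiv A$; (7) $A\wedge B\equiv B\wedge A$; (8) $A\vee B\equiv B\vee A$; (9) $\neg\neg A\equiv A$; (10) $(A\vee\neg A)\to B\equiv B$; (11) $(A\to B)\wedge(A\to C)\equiv A\to(B\wedge C)$; (12) $(A\to C)\wedge(B\to C)\equiv (A\vee B)\to C$.
   Context: Formulas are built from a countably infinite set of propositional variables, the constant $\bot$, the unary connective $\neg$ and the binary connectives $\wedge,\vee,\to$; $\top$ abbreviates $\neg\bot$. Let $V=\{t,f,b\}$. A three-valued logic is specified by truth functions $\neg^M:V\to V$ and $\wedge^M,\vee^M,\to^M:V^2\to V$ that agree with the classical truth functions of negation, conjunction, disjunction and material implication on $\{t,f\}$, with $\bot$ interpreted as $f$; two logics are different iff at least one of these truth functions differs. A valuation is a map $\nu$ from formulas to $V$ with $\nu(\bot)=f$, $\nu(\neg A)=\neg^M(\nu(A))$, $\nu(A\wedge B)=\wedge^M(\nu(A),\nu(B))$, and similarly for $\vee,\to$ (values on propositional variables are arbitrary). The designated values are $t$ and $b$: $\Gamma\models A$ iff for every valuation $\nu$, either $\nu(A')=f$ for some $A'\in\Gamma$ or $\nu(A)\in\{t,b\}$. The logic is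 paraconsistent if there are formulas $A,B$ with $\{A,\neg A\}\not\models B$. Its logical equivalence relation is: $A\equiv B$ iff $\nu(A)=\nu(B)$ for every valuation $\nu$. Property (a): for every set of formulas $\Gamma$ and formula $A$, $\Gamma\models A$ implies $\Gamma\models_{\mathrm{CPL}}A$, where $\models_{\mathrm{CPL}}$ is the consequence relation of classical propositional logic (with $\bot$ false, $\to$ material implication). Property (b): for all sets $\Gamma$ and formulas $A,B,C$: (b1) $\Gamma\cup\{A\}\models B$ iff $\Gamma\models A\to B$; (b2) $\Gamma\models A\wedge B$ iff $\Gamma\models A$ and $\Gamma\models B$; (b3) $\Gamma\cup\{A\vee B\}\models C$ iff $\Gamma\cup\{A\}\models C$ and $\Gamma\cup\{B\}\models C$. (Under these conventions there are exactly 8192 such paraconsistent logics with properties (a) and (b).) *)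

Inductive form : Type :=
| Var : nat -> form
| Bot : form
| Neg : form -> form
| And : form -> form -> form
| Or  : form -> form -> form
| Imp : form -> form -> form.

Definition Top : form := Neg Bot.

Inductive V : Type := vt | vf | vb.

Record logic : Type := mkLogic {
  negM : V -> V;
  andM : V -> V -> V;
  orM  : V -> V -> V;
  impM : V -> V -> V
}.

Definition is_classical_bool (b : bool) : V := if b then vt else vf.

Definition classical_on_tf (L : logic) : Prop :=
  negM L vt = vf /\ negM L vf = vt /\
  (forall x y : bool,
      andM L (is_classical_bool x) (is_classical_bool y) = is_classical_bool (x && y) /\
      orM  L (is_classical_bool x) (is_classical_bool y) = is_classical_bool (x || y) /\
      impM L (is_classical_bool x) (is_classical_bool y) = is_classical_bool (implb x y)).

Definition same_logic (L L' : logic) : Prop :=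
  (forall x, negM L x = negM L' x) /\
  (forall x y, andM L x y = andM L' x y) /\
  (forall x y, orM L x y = orM L' x y) /\
  (forall x y, impM L x y = impM L' x y).

Definition is_valuation (L : logic) (nu : form -> V) : Prop :=
  nu Bot = vf /\
  (forall A, nu (Neg A) = negM L (nu A)) /\
  (forall A B, nu (And A B) = andM L (nu A) (nu B)) /\
  (forall A B, nu (Or A B) = orM L (nu A) (nu B)) /\
  (forall A B, nu (Imp A B) = impM L (nu A) (nu B)).

Definition designated (x : V) : Prop := x = vt \/ x = vb.

Definition fset := form -> Prop.

Definition entails (L : logic) (G : fset) (A : form) : Prop :=
  forall nu, is_valuation L nu ->
    (exists A', G A' /\ nu A' = vf) \/ designated (nu A).

Definition add (G : fset) (A : form) : fset := fun X => G X \/ X = A.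

Fixpoint ceval (v : nat -> bool) (A : form) : bool :=
  match A with
  | Var n => v n
  | Bot => false
  | Neg A => negb (ceval v A)
  | And A B => ceval v A && ceval v B
  | Or A B => ceval v A || ceval v B
  | Imp A B => implb (ceval v A) (ceval v B)
  end.

Definition entails_CPL (G : fset) (A : form) : Prop :=
  forall v, (forall A', G A' -> ceval v A' = true) -> ceval v A = true.

Definition paraconsistent (L : logic) : Prop :=
  exists A B, ~ entails L (fun X => X = A \/ X = Neg A) B.

Definition property_a (L : logic) : Prop :=
  forall G A, entails L G A -> entails_CPL G A.

Definition property_b (L : logic) : Prop :=
  (forall G A B, entails L (add G A) B <-> entails L G (Imp A B)) /\
  (forall G A B, entails L G (And A B) <-> (entails L G A /\ entails L G B)) /\
  (forall G A B C, entails L (add G (Or A B)) C <->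
                   (entails L (add G A) C /\ entails L (add G B) C)).

Definition in_class (L : logic) : Prop :=
  classical_on_tf L /\ paraconsistent L /\ property_a L /\ property_b L.

Definition equiv (L : logic) (A B : form) : Prop :=
  forall nu, is_valuation L nu -> nu A = nu B.

Definition satisfies_laws (L : logic) : Prop :=
  forall A B C : form,
    equiv L (And A Bot) Bot /\
    equiv L (Or A Top) Top /\
    equiv L (And A Top) A /\
    equiv L (Or A Bot) A /\
    equiv L (And A A) A /\
    equiv L (Or A A) A /\
    equiv L (And A B) (And B A) /\
    equiv L (Or A B) (Or B A) /\
    equiv L (Neg (Neg A)) A /\
    equiv L (Imp (Or A (Neg A)) B) B /\
    equiv L (And (Imp A B) (Imp A C)) (Imp A (And B C)) /\
    equiv L (And (Imp A C) (Imp B C)) (Imp (Or A B) C).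

(* The logic is LFI1: negation swaps t and f and fixes b, conjunction and
   disjunction are minimum and maximum for f < b < t, and A -> B takes the
   value of B unless A is f.  Property (a) holds for every logic that is
   classical on {t, f}, because classical valuations are valuations; property
   (b) holds because a conjunction is designated iff both conjuncts are, a
   disjunction is f iff both disjuncts are, and an implication is designated
   iff its antecedent is f or its consequent is designated.

   Uniqueness uses only classicality, paraconsistency and the laws, not (a)
   or (b): ~~b = b rules out ~b = t, and paraconsistency rules out ~b = f;
   laws (1)-(8) then fix conjunction and disjunction at b; law (10) gives
   t -> y = y and b -> y = y; and law (11) at (f, f, b) reads
   t /\ (f -> b) = t, which forces f -> b = t. *)

From Stdlib Require Import Setoid.

Fixpoint eval (L : logic) (v : nat -> V) (A : form) : V :=
  match A with
  | Var n => v n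
  | Bot => vf
  | Neg A => negM L (eval L v A)
  | And A B => andM L (eval L v A) (eval L v B)
  | Or A B => orM L (eval L v A) (eval L v B)
  | Imp A B => impM L (eval L v A) (eval L v B)
  end.

Lemma eval_is_valuation (L : logic) (v : nat -> V) : is_valuation L (eval L v).
Proof. repeat split. Qed.

Lemma valuation_eval {L : logic} {nu : form -> V} :
  is_valuation L nu -> forall A, nu A = eval L (fun n => nu (Var n)) A.
Proof.
  intros (Hbot & Hneg & Hand & Hor & Himp) A.
  induction A; simpl; rewrite ?Hbot, ?Hneg, ?Hand, ?Hor, ?Himp, ?IHA, ?IHA1, ?IHA2;
    reflexivity.
Qed.

Lemma equiv_eval (L : logic) (A B : form) :
  equiv L A B <-> forall v, eval L v A = eval L v B.
Proof.
  split.
  - intros H v. apply H, eval_is_valuation.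
  - intros H nu Hv. rewrite (valuation_eval Hv A), (valuation_eval Hv B). apply H.
Qed.

Lemma entails_add (L : logic) (G : fset) (A B : form) :
  entails L (add G A) B <->
  forall nu, is_valuation L nu ->
    (exists A', G A' /\ nu A' = vf) \/ nu A = vf \/ designated (nu B).
Proof.
  unfold entails, add. split; intros H nu Hv; specialize (H nu Hv).
  - destruct H as [[A' [[HG | ->] HA']] | HB]; eauto.
  - destruct H as [[A' [HG HA']] | [HA | HB]]; eauto.
Qed.

Lemma eval_classical (L : logic) (v : nat -> bool) (A : form) :
  classical_on_tf L ->
  eval L (fun n => is_classical_bool (v n)) A = is_classical_bool (ceval v A).
Proof.
  intros (Hnt & Hnf & Hbin).
  induction A; simpl; rewrite ?IHA, ?IHA1, ?IHA2; try reflexivity;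
    [destruct (ceval v A); assumption | ..];
    destruct (Hbin (ceval v A1) (ceval v A2)) as (Hand & Hor & Himp); assumption.
Qed.

Lemma classical_property_a (L : logic) : classical_on_tf L -> property_a L.
Proof.
  intros Hc G A H v Hv.
  destruct (H _ (eval_is_valuation L (fun n => is_classical_bool (v n))))
    as [[A' [HG HA']] | HA];
    rewrite (eval_classical _ _ _ Hc) in *.
  - rewrite (Hv A' HG) in HA'. discriminate.
  - destruct (ceval v A); [reflexivity | destruct HA; discriminate].
Qed.

Lemma paraconsistent_iff (L : logic) :
  negM L vt = vf -> (paraconsistent L <-> negM L vb <> vf).
Proof.
  intros Hnt. split.
  - intros [A [B H]] Hnb. apply H. intros nu (_ & Hneg & _). left.
    destruct (nu A) eqn:EA.
    + exists (Neg A). split; [right; reflexivity | rewrite Hneg, EA; exact Hnt].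
    + exists A. split; [left; reflexivity | exact EA].
    + exists (Neg A). split; [right; reflexivity | rewrite Hneg, EA; exact Hnb].
  - intros Hnb. exists (Var 0), Bot. intros H.
    destruct (H _ (eval_is_valuation L (fun _ => vb)))
      as [[A' [[-> | ->] HA]] | [HB | HB]]; simpl in *; congruence.
Qed.

Lemma property_b_of_tables (L : logic) :
  (forall x y, designated (impM L x y) <-> x = vf \/ designated y) ->
  (forall x y, designated (andM L x y) <-> designated x /\ designated y) ->
  (forall x y, orM L x y = vf <-> x = vf /\ y = vf) ->
  property_b L.
Proof.
  intros Himp Hand Hor. split; [|split].
  - intros G A B. rewrite entails_add. unfold entails.
    split; intros H nu Hv; specialize (H nu Hv);
      destruct Hv as (_ & _ & _ & _ & HI); rewrite HI in *;
      pose proof (Himp (nu A) (nu B)); tauto.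
  - intros G A B. unfold entails. split.
    + intros H; split; intros nu Hv; specialize (H nu Hv);
        destruct Hv as (_ & _ & HA & _); rewrite HA in H;
        pose proof (Hand (nu A) (nu B)); tauto.
    + intros [H1 H2] nu Hv; specialize (H1 nu Hv); specialize (H2 nu Hv);
        destruct Hv as (_ & _ & -> & _); pose proof (Hand (nu A) (nu B)); tauto.
  - intros G A B C. rewrite !entails_add. split.
    + intros H; split; intros nu Hv; specialize (H nu Hv);
        destruct Hv as (_ & _ & _ & HO & _); rewrite HO in H;
        pose proof (Hor (nu A) (nu B)); tauto.
    + intros [H1 H2] nu Hv; specialize (H1 nu Hv); specialize (H2 nu Hv);
        destruct Hv as (_ & _ & _ & -> & _); pose proof (Hor (nu A) (nu B)); tauto.
Qed.

Definition lfi1_neg (x : V) : V :=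
  match x with vt => vf | vf => vt | vb => vb end.

Definition lfi1_and (x y : V) : V :=
  match x, y with
  | vf, _ | _, vf => vf
  | vt, vt => vt
  | _, _ => vb
  end.

Definition lfi1_or (x y : V) : V :=
  match x, y with
  | vt, _ | _, vt => vt
  | vf, vf => vf
  | _, _ => vb
  end.

Definition lfi1_imp (x y : V) : V :=
  match x with vf => vt | _ => y end.

Definition LFI1 : logic := mkLogic lfi1_neg lfi1_and lfi1_or lfi1_imp.

Lemma classical_on_tf_values (L : logic) : classical_on_tf L ->
  andM L vt vt = vt /\ andM L vt vf = vf /\ andM L vf vt = vf /\ andM L vf vf = vf /\
  orM L vt vt = vt /\ orM L vt vf = vt /\ orM L vf vt = vt /\ orM L vf vf = vf /\
  impM L vt vt = vt /\ impM L vt vf = vf /\ impM L vf vt = vt /\ impM L vf vf = vt.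
Proof.
  intros (_ & _ & Hbin).
  destruct (Hbin true true) as (? & ? & ?), (Hbin true false) as (? & ? & ?),
    (Hbin false true) as (? & ? & ?), (Hbin false false) as (? & ? & ?).
  simpl in *. tauto.
Qed.

Lemma LFI1_classical_on_tf : classical_on_tf LFI1.
Proof. split; [|split]; [reflexivity | reflexivity | now intros [|] [|]]. Qed.

Lemma LFI1_property_b : property_b LFI1.
Proof.
  apply property_b_of_tables; intros [| |] [| |]; unfold designated; simpl;
    intuition discriminate.
Qed.

Lemma LFI1_in_class : in_class LFI1.
Proof.
  split; [|split; [|split]].
  - exact LFI1_classical_on_tf.
  - apply paraconsistent_iff; [reflexivity | discriminate].
  - apply classical_property_a, LFI1_classical_on_tf.
  - exact LFI1_property_b.
Qed.

Lemma LFI1_laws : satisfies_laws LFI1.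
Proof.
  intros A B C. repeat split; apply equiv_eval; intros v; simpl;
    destruct (eval LFI1 v A), (eval LFI1 v B), (eval LFI1 v C); reflexivity.
Qed.

Definition assign3 (x y z : V) (n : nat) : V :=
  match n with 0 => x | 1 => y | _ => z end.

Lemma satisfies_laws_values (L : logic) : satisfies_laws L -> forall x y z : V,
  andM L x vf = vf /\
  orM L x (negM L vf) = negM L vf /\
  andM L x (negM L vf) = x /\
  orM L x vf = x /\
  andM L x x = x /\
  orM L x x = x /\
  andM L x y = andM L y x /\
  orM L x y = orM L y x /\
  negM L (negM L x) = x /\
  impM L (orM L x (negM L x)) y = y /\
  andM L (impM L x y) (impM L x z) = impM L x (andM L y z) /\
  andM L (impM L x z) (impM L y z) = impM L (orM L x y) z.
Proof.
  intros Hl x y z.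
  pose proof (eval_is_valuation L (assign3 x y z)) as Hv.
  destruct (Hl (Var 0) (Var 1) (Var 2))
    as (E1 & E2 & E3 & E4 & E5 & E6 & E7 & E8 & E9 & E10 & E11 & E12).
  repeat split; [exact (E1 _ Hv) | exact (E2 _ Hv) | exact (E3 _ Hv) | exact (E4 _ Hv)
    | exact (E5 _ Hv) | exact (E6 _ Hv) | exact (E7 _ Hv) | exact (E8 _ Hv)
    | exact (E9 _ Hv) | exact (E10 _ Hv) | exact (E11 _ Hv) | exact (E12 _ Hv)].
Qed.

Section Uniqueness.

Variable L : logic.
Hypothesis HL_classical : classical_on_tf L.
Hypothesis HL_paraconsistent : paraconsistent L.
Hypothesis HL_laws : satisfies_laws L.

Let laws := satisfies_laws_values L HL_laws.
Let tf := classical_on_tf_values L HL_classical.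
Let neg_t : negM L vt = vf := proj1 HL_classical.
Let neg_f : negM L vf = vt := proj1 (proj2 HL_classical).

Lemma neg_LFI1 (x : V) : negM L x = lfi1_neg x.
Proof.
  destruct x; simpl; [exact neg_t | exact neg_f |].
  assert (Hinv : negM L (negM L vb) = vb) by (pose proof (laws vb vb vb); tauto).
  assert (Hnb : negM L vb <> vf) by (apply paraconsistent_iff; assumption).
  destruct (negM L vb); [rewrite neg_t in Hinv; discriminate | contradiction | reflexivity].
Qed.

Lemma and_LFI1 (x y : V) : andM L x y = lfi1_and x y.
Proof.
  destruct (laws vb vt vt) as (Hbf & _ & Hbt & _ & Hbb & _ & Hbt_tb & _).
  destruct (laws vb vf vf) as (_ & _ & _ & _ & _ & _ & Hbf_fb & _).
  destruct tf as (Htt & Htf & Hft & Hff & _).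
  rewrite neg_f in Hbt.
  destruct x, y; simpl; congruence.
Qed.

Lemma or_LFI1 (x y : V) : orM L x y = lfi1_or x y.
Proof.
  destruct (laws vb vt vt) as (_ & Hbt & _ & Hbf & _ & Hbb & _ & Hbt_tb & _).
  destruct (laws vb vf vf) as (_ & _ & _ & _ & _ & _ & _ & Hbf_fb & _).
  destruct tf as (_ & _ & _ & _ & Htt & Htf & Hft & Hff & _).
  rewrite neg_f in Hbt.
  destruct x, y; simpl; congruence.
Qed.

Lemma imp_LFI1 (x y : V) : impM L x y = lfi1_imp x y.
Proof.
  destruct tf as (_ & _ & _ & _ & _ & _ & _ & _ & _ & _ & Hft & Hff).
  destruct x; simpl.
  - destruct (laws vt y y) as (_ & _ & _ & _ & _ & _ & _ & _ & _ & Hexcl & _).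
    rewrite neg_t, or_LFI1 in Hexcl. exact Hexcl.
  - destruct (laws vf vf vb) as (_ & _ & _ & _ & _ & _ & _ & _ & _ & _ & Hdistr & _).
    rewrite Hff, !and_LFI1 in Hdistr.
    destruct y; [exact Hft | exact Hff | destruct (impM L vf vb); simpl in Hdistr; congruence].
  - destruct (laws vb y y) as (_ & _ & _ & _ & _ & _ & _ & _ & _ & Hexcl & _).
    rewrite neg_LFI1, or_LFI1 in Hexcl. exact Hexcl.
Qed.

Lemma LFI1_unique : same_logic LFI1 L.
Proof.
  repeat split; intros; symmetry;
    [apply neg_LFI1 | apply and_LFI1 | apply or_LFI1 | apply imp_LFI1].
Qed.

End Uniqueness.

Theorem theorem2 :
  exists L : logic,
    in_class L /\ satisfies_laws L /\
    forall L' : logic, in_class L' -> satisfies_laws L' -> same_logic L L'.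
Proof.
  exists LFI1. split; [exact LFI1_in_class | split; [exact LFI1_laws |]].
  intros L (Hc & Hp & _ & _) Hl.
  exact (LFI1_unique L Hc Hp Hl).
Qed.
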